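(* Let $N\ge 0$ be an integer and let $|\psi\rangle=\sum_{n=0}^N a_n|n\rangle$ be a normalized single-mode state ($\sum_n|a_n|^2=1$) supported on Fock states with at most $N$ photons. Then $|\psi\rangle$ has approximate coherent rank at most $N+1$. Explicitly, for a nonzero real parameter $\epsilon$, set $$c_k=\frac{e^{\epsilon^2/2}}{N+1}\sum_{n=0}^N \sqrt{n!}\,\frac{a_n}{\epsilon^n}\,e^{-2\pi i nk/(N+1)},\qquad k=0,\dots,N,$$ and $$|\tilde\psi\rangle=\frac{1}{\sqrt{\mathcal N}}\sum_{k=0}^N c_k\,\big|\epsilon e^{2\pi i k/(N+1)}\big\rangle ,$$ where $\mathcal N$ is the squared norm of $\sum_{k=0}^N c_k|\epsilon e^{2\pi i k/(N+1)}\rangle$ (so that $|\tilde\psi\rangle$ is normalized). Then $\mathcal N=1+O\!\left(\epsilon^{2(N+1)}/(N+1)!\right)$ as $\epsilon\to 0$, and the fidelity satisfies $|\langle\psi|\tilde\psi\rangle|^2=1/\mathcal N$; in particular the fidelity can be made arbitrarily close to $1$ by taking $\epsilon$ small.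
   Context: Single-mode Hilbert space with Fock (number) basis $\{|n\rangle\}_{n\ge0}$. For $\alpha\in\mathbb C$, the coherent state is $|\alpha\rangle=e^{-|\alpha|^2/2}\sum_{n=0}^\infty\frac{\alpha^n}{\sqrt{n!}}|n\rangle$ (Greek letters inside kets denote coherent states, Latin letters Fock states). A state has coherent rank $k$ if it can be written as $\sum_{i=1}^k c_i|\alpha_i^{(1)},\dots,\alpha_i^{(m)}\rangle$, a superposition of $k$ (multi-mode product) coherent states. The approximate coherent rank of a state $|\psi\rangle$ is the smallest integer $k$ such that for every $\delta>0$ there is a state $|\tilde\psi\rangle$ of coherent rank $k$ with $|\langle\psi|\tilde\psi\rangle|^2>1-\delta$. *)

From Stdlib Require Import Reals List Factorial.
From Coquelicot Require Import Coquelicot.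
Open Scope R_scope.

(* A single-mode vector, given by its Fock-basis amplitudes <n|v>. *)
Definition state := nat -> C.

Definition cis (t : R) : C := (cos t, sin t).

Definition coherent (alpha : C) : state :=
  fun n => Cmult (RtoC (exp (- (Cmod alpha)^2 / 2)))
                 (Cdiv (Cpow alpha n) (RtoC (sqrt (INR (fact n))))).

Definition inner (u v : state) : C :=
  (Series (fun n => fst (Cmult (Cconj (u n)) (v n))),
   Series (fun n => snd (Cmult (Cconj (u n)) (v n)))).

Definition sqnorm (v : state) : R := Series (fun n => (Cmod (v n))^2).

Definition fidelity (u v : state) : R := (Cmod (inner u v))^2.

(* csum k f = f 0 + ... + f (k-1) *)
Definition csum (k : nat) (f : nat -> C) : C :=
  fold_right Cplus (RtoC 0) (map f (seq 0 k)).

Definition coherent_rank_le (k : nat) (v : state) : Prop :=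
  exists (c alpha : nat -> C),
    forall n, v n = csum k (fun i => Cmult (c i) (coherent (alpha i) n)).

Definition approx_coherent_rank_le (k : nat) (psi : state) : Prop :=
  forall delta : R, 0 < delta ->
    exists v : state, coherent_rank_le k v /\ sqnorm v = 1 /\
                      fidelity psi v > 1 - delta.

Definition omega (N k : nat) : C := cis (2 * PI * INR k / INR (S N)).

Definition coef (N : nat) (a : nat -> C) (eps : R) (k : nat) : C :=
  Cmult (RtoC (exp (eps^2 / 2) / INR (S N)))
    (sum_n (fun n => Cmult (RtoC (sqrt (INR (fact n)) / eps ^ n))
                        (Cmult (a n) (cis (- (2 * PI * INR n * INR k / INR (S N))))))
       N).

Definition phi_un (N : nat) (a : nat -> C) (eps : R) : state :=
  fun m => sum_n (fun k => Cmult (coef N a eps k)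
                              (coherent (Cmult (RtoC eps) (omega N k)) m)) N.

Definition calN (N : nat) (a : nat -> C) (eps : R) : R := sqnorm (phi_un N a eps).

Definition psi_tilde (N : nat) (a : nat -> C) (eps : R) : state :=
  fun m => Cmult (RtoC (/ sqrt (calN N a eps))) (phi_un N a eps m).

From Stdlib Require Import Reals Factorial Lra Lia Psatz List.
From Coquelicot Require Import Coquelicot.
Open Scope R_scope.

(* The coherent states |eps w^k>, w = e^{2 pi i/(N+1)}, have Fock amplitudes
   e^{-eps^2/2} eps^m w^{km} / sqrt(m!), and the c_k are a discrete Fourier transform of
   sqrt(n!) a_n / eps^n.  Orthogonality of the (N+1)-th roots of unity therefore makes the
   unnormalised superposition equal to a_m on every m <= N, while each m > N only sees the
   alias j = m mod (N+1), with amplitude eps^m/sqrt(m!) * sqrt(j!)/eps^j * a_j.  Hence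
   <psi|phi> = 1, the fidelity is 1/calN, and calN - 1 is a sum of aliased terms of size
   at most eps^{2(m-j)}/(m-j)! with m - j a positive multiple of N+1, which is
   O(eps^{2(N+1)}/(N+1)!). *)

(* [sum_n] over [C] is typed in [AbelianMonoid.sort C_AbelianMonoid]; [ring] and [field]
   only recognise the equation once it is retyped at [C]. *)
Ltac C_goal := match goal with |- ?x = ?y => change (@eq C x y) end.

Lemma C_eq (x y : C) : fst x = fst y -> snd x = snd y -> x = y.
Proof. destruct x, y; simpl; intros -> ->; reflexivity. Qed.

Lemma sum_n_Cmult_l (c : C) (u : nat -> C) n :
  sum_n (fun k => (c * u k)%C) n = (c * sum_n u n)%C.
Proof. exact (sum_n_mult_l (K := C_Ring) c u n). Qed.

Lemma sum_n_Cmult_r (c : C) (u : nat -> C) n :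
  sum_n (fun k => (u k * c)%C) n = (sum_n u n * c)%C.
Proof. exact (sum_n_mult_r (K := C_Ring) c u n). Qed.

Lemma sum_n_const_C (c : C) n : sum_n (fun _ => c) n = (INR (S n) * c)%C.
Proof.
  induction n as [|n IH].
  - rewrite sum_O; simpl; ring.
  - rewrite sum_Sn, IH; change plus with Cplus; rewrite (S_INR (S n)), RtoC_plus; C_goal; ring.
Qed.

Lemma sum_n_single {G : AbelianMonoid} (f : nat -> G) j n :
  (forall k, (k <= n)%nat -> k <> j -> f k = zero) ->
  sum_n f n = if (j <=? n)%nat then f j else zero.
Proof.
  induction n as [|n IH]; intros Hf.
  - rewrite sum_O; destruct j; simpl; [reflexivity | apply Hf; lia].
  - rewrite sum_Sn, IH by (intros k Hk; apply Hf; lia).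
    destruct (Nat.eq_dec j (S n)) as [->|Hj].
    + rewrite Nat.leb_refl, (proj2 (Nat.leb_gt (S n) n)) by lia; apply plus_zero_l.
    + rewrite (Hf (S n)) by auto; rewrite plus_zero_r.
      destruct (Nat.leb_spec j n), (Nat.leb_spec j (S n)); auto; lia.
Qed.

Lemma sum_n_ge_term (f : nat -> R) j n :
  (forall k, 0 <= f k) -> (j <= n)%nat -> f j <= sum_n f n.
Proof.
  intros Hf Hj.
  apply Rle_trans with (sum_n (fun k => if Nat.eq_dec k j then f j else 0) n).
  - rewrite (sum_n_single _ j), (proj2 (Nat.leb_le j n) Hj).
    + destruct (Nat.eq_dec j j); [lra | congruence].
    + intros k _ Hk; destruct (Nat.eq_dec k j); [congruence | reflexivity].
  - apply sum_n_m_le; intros k; destruct (Nat.eq_dec k j) as [->|]; [lra | apply Hf].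
Qed.

Lemma fold_right_Cplus (b : C) l :
  fold_right Cplus b l = (fold_right Cplus 0 l + b)%C.
Proof. induction l as [|x l IH]; simpl; [|rewrite IH]; C_goal; ring. Qed.

Lemma csum_sum_n (f : nat -> C) n : csum (S n) f = sum_n f n.
Proof.
  unfold csum; induction n as [|n IH].
  - rewrite sum_O; simpl; C_goal; ring.
  - rewrite seq_S, map_app, fold_right_app, fold_right_Cplus, IH, sum_Sn.
    change plus with Cplus; simpl; C_goal; ring.
Qed.

Lemma Series_finite (f : nat -> R) n :
  (forall k, (n < k)%nat -> f k = 0) -> Series f = sum_n f n.
Proof.
  intros Hf; apply is_series_unique.
  apply filterlim_ext_loc with (fun _ => sum_n f n); [|apply filterlim_const].
  exists n; intros p Hp; induction Hp as [|p Hp IH]; [reflexivity|].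
  rewrite sum_Sn, <- IH, Hf by lia; symmetry; apply Rplus_0_r.
Qed.

Lemma Series_nonneg (f : nat -> R) :
  (forall n, 0 <= f n) -> ex_series f -> 0 <= Series f.
Proof.
  intros Hf Hex.
  rewrite <- (sum_O (fun _ => 0)), <- (Series_finite (fun _ => 0) 0) by reflexivity.
  apply Series_le; [intros n; split; [lra | apply Hf] | exact Hex].
Qed.

Lemma fact_mul_le i r : (fact i * fact r <= fact (i + r))%nat.
Proof.
  induction i as [|i IH]; simpl; [lia|].
  pose proof (lt_O_fact r); nia.
Qed.

Definition exp_term (x : R) (m : nat) : R := x ^ m / INR (fact m).

Lemma exp_term_gt0 x m : 0 < x -> 0 < exp_term x m.
Proof.
  intros Hx; apply Rdiv_lt_0_compat; [apply pow_lt, Hx | apply INR_fact_lt_0].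
Qed.

Lemma exp_term_add_le x i r : 0 <= x ->
  exp_term x (i + r) <= exp_term x i * exp_term x r.
Proof.
  intros Hx; unfold exp_term; rewrite pow_add.
  pose proof (INR_fact_lt_0 i); pose proof (INR_fact_lt_0 r).
  assert (Hf : INR (fact i) * INR (fact r) <= INR (fact (i + r)))
    by (rewrite <- mult_INR; apply le_INR, fact_mul_le).
  replace (x ^ i / INR (fact i) * (x ^ r / INR (fact r)))
    with (x ^ i * x ^ r / (INR (fact i) * INR (fact r))) by (field; lra).
  apply Rmult_le_compat_l; [apply Rmult_le_pos; apply pow_le, Hx|].
  apply Rinv_le_contravar; nra.
Qed.

Lemma exp_term_le_pow x r : 0 <= x -> exp_term x r <= x ^ r.
Proof.
  intros Hx; unfold exp_term.
  assert (1 <= INR (fact r)) by (apply (le_INR 1), lt_O_fact).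
  pose proof (pow_le x r Hx).
  apply Rmult_le_reg_r with (INR (fact r)); [lra|].
  unfold Rdiv; rewrite Rmult_assoc, Rinv_l by lra; nra.
Qed.

Lemma ex_series_exp_term x : ex_series (exp_term x).
Proof.
  exists (exp x); eapply is_series_ext; [|apply (is_exp_Reals x)].
  intros n; unfold exp_term; rewrite pow_n_pow; reflexivity.
Qed.

Lemma pow_fact_le_Rabs x n : Rabs x <= 1 -> x ^ (2 * S n) / INR (fact (S n)) <= Rabs x.
Proof.
  intros Hx; rewrite pow_mult; change (exp_term (x ^ 2) (S n) <= Rabs x).
  eapply Rle_trans; [apply exp_term_le_pow, pow2_ge_0|].
  rewrite <- pow2_abs; pose proof (Rabs_pos x).
  assert ((Rabs x ^ 2) ^ n <= 1) by (rewrite <- (pow1 n); apply pow_incr; nra).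
  pose proof (pow_le (Rabs x ^ 2) n (pow2_ge_0 _)).
  change ((Rabs x ^ 2) ^ S n) with (Rabs x ^ 2 * (Rabs x ^ 2) ^ n).
  nra.
Qed.

Lemma pow_le_geom x s k N : 0 <= x <= / 4 -> (k <= s + N)%nat ->
  x ^ s <= 4 ^ N * (/ 4) ^ k.
Proof.
  intros Hx Hk.
  apply Rle_trans with ((/ 4) ^ s); [apply pow_incr; lra|].
  assert (0 < 4 ^ s /\ 0 < 4 ^ k /\ 0 < 4 ^ N) as (? & ? & ?) by (repeat split; apply pow_lt; lra).
  assert (4 ^ k <= 4 ^ N * 4 ^ s) by (rewrite <- pow_add; apply Rle_pow; [lra | lia]).
  rewrite !pow_inv; apply Rmult_le_reg_r with (4 ^ s * 4 ^ k); [nra|].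
  replace (/ 4 ^ s * (4 ^ s * 4 ^ k)) with (4 ^ k) by (field; lra).
  replace (4 ^ N * / 4 ^ k * (4 ^ s * 4 ^ k)) with (4 ^ N * 4 ^ s) by (field; lra).
  assumption.
Qed.

Lemma inv_1_plus_ge t : 0 <= t -> 1 - t <= / (1 + t).
Proof.
  intros Ht; apply Rmult_le_reg_r with (1 + t); [lra|].
  rewrite Rinv_l by lra; nra.
Qed.

(** * Roots of unity and discrete Fourier inversion *)

Lemma cis_add s t : (cis s * cis t)%C = cis (s + t).
Proof. unfold cis; apply C_eq; simpl; rewrite ?cos_plus, ?sin_plus; ring. Qed.

Lemma cis_pow t m : (cis t ^ m)%C = cis (INR m * t).
Proof.
  induction m as [|m IH].
  - unfold cis; simpl; rewrite Rmult_0_l, cos_0, sin_0; reflexivity.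
  - rewrite Cpow_S, IH, cis_add, S_INR; f_equal; ring.
Qed.

Lemma cis_add_2PI t q : cis (t + 2 * INR q * PI) = cis t.
Proof. unfold cis; now rewrite cos_period, sin_period. Qed.

Lemma cis_2PI_INR q : cis (2 * PI * INR q) = 1.
Proof.
  replace (2 * PI * INR q) with (0 + 2 * INR q * PI) by ring.
  rewrite cis_add_2PI; unfold cis; now rewrite cos_0, sin_0.
Qed.

Lemma Cmod_cis t : Cmod (cis t) = 1.
Proof.
  unfold Cmod, cis; simpl.
  rewrite !Rmult_1_r, Rplus_comm.
  change (sqrt ((sin t)² + (cos t)²) = 1); rewrite sin2_cos2; apply sqrt_1.
Qed.

Lemma cis_2PI_neq1 r : 0 < Rabs r < 1 -> cis (2 * PI * r) <> 1.
Proof.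
  intros Hr E.
  assert (Hcos : cos (2 * (PI * r)) = 1)
    by (apply (f_equal fst) in E; simpl in E; rewrite <- E; f_equal; ring).
  rewrite cos_2a_sin in Hcos.
  assert (Hsin : sin (PI * Rabs r) = 0).
  { destruct (Rle_or_lt 0 r).
    - rewrite Rabs_pos_eq by lra; nra.
    - rewrite Rabs_left, Ropp_mult_distr_r_reverse, sin_neg by lra; nra. }
  pose proof PI_RGT_0.
  assert (0 < sin (PI * Rabs r)) by (apply sin_gt_0; nra).
  lra.
Qed.

Lemma Cgeom_sum (w : C) n :
  ((1 - w) * sum_n (Cpow w) n)%C = (1 - w ^ S n)%C.
Proof.
  induction n as [|n IH].
  - rewrite sum_O; simpl; ring.
  - rewrite sum_Sn; change plus with Cplus.
    rewrite Cmult_plus_distr_l, IH; simpl; ring.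
Qed.

Lemma sum_n_root_of_unity (w : C) n :
  (w ^ S n)%C = 1 -> w <> 1 -> sum_n (Cpow w) n = RtoC 0.
Proof.
  intros Hroot Hw.
  assert (Hd : (1 - w)%C <> 0).
  { intro D; apply Hw; replace w with (1 - (1 - w))%C by ring; rewrite D; ring. }
  assert (Hcancel : forall s : C, ((1 - w) * s)%C = 0 -> s = 0).
  { intros s Es.
    transitivity (/ (1 - w) * ((1 - w) * s))%C; [field; exact Hd | rewrite Es; ring]. }
  apply Hcancel; rewrite Cgeom_sum, Hroot; ring.
Qed.

Lemma sum_n_cis_roots N j n : (j <= N)%nat -> (n <= N)%nat ->
  sum_n (fun k => cis (2 * PI * INR k * (INR j - INR n) / INR (S N))) N =
  if Nat.eq_dec j n then RtoC (INR (S N)) else RtoC 0.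
Proof.
  intros Hj Hn.
  assert (HS : 0 < INR (S N)) by (apply lt_0_INR; lia).
  set (w := cis (2 * PI * ((INR j - INR n) / INR (S N)))).
  rewrite (sum_n_ext _ (Cpow w))
    by (intros k; unfold w; rewrite cis_pow; f_equal; field; lra).
  destruct (Nat.eq_dec j n) as [<-|Hne].
  - assert (Hw : w = 1).
    { unfold w; rewrite <- (cis_2PI_INR 0); f_equal.
      rewrite Rminus_diag; change (INR 0) with 0; field; lra. }
    rewrite Hw, (sum_n_ext (Cpow 1) (fun _ => RtoC 1)) by (intros; apply Cpow_1_l).
    rewrite sum_n_const_C; C_goal; ring.
  - apply sum_n_root_of_unity; unfold w.
    + rewrite cis_pow, <- (cis_add_2PI _ n).
      replace (INR (S N) * (2 * PI * ((INR j - INR n) / INR (S N))) + 2 * INR n * PI)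
        with (2 * PI * INR j) by (field; lra).
      apply cis_2PI_INR.
    + apply cis_2PI_neq1.
      assert (INR j <> INR n) by (intro E; apply Hne, INR_eq, E).
      assert (INR j <= INR N /\ INR n <= INR N) as [] by (split; apply le_INR; auto).
      pose proof (pos_INR j); pose proof (pos_INR n).
      rewrite S_INR in *; rewrite Rabs_div, (Rabs_pos_eq (INR N + 1)) by lra.
      split.
      * apply Rdiv_lt_0_compat; [apply Rabs_pos_lt|]; lra.
      * apply Rlt_div_l; [lra|]; rewrite Rmult_1_l; apply Rabs_def1; lra.
Qed.

Lemma dft_inversion N (A : nat -> C) m :
  sum_n (fun k =>
    (sum_n (fun n => A n * cis (- (2 * PI * INR n * INR k / INR (S N))))%C N
     * cis (INR m * (2 * PI * INR k / INR (S N))))%C) N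
  = (INR (S N) * A (m mod S N))%C.
Proof.
  set (j := m mod S N); set (q := (m / S N)%nat).
  assert (Hj : (j <= N)%nat) by (pose proof (Nat.mod_upper_bound m (S N)); lia).
  assert (Hm : m = (j + q * S N)%nat) by (pose proof (Nat.div_mod_eq m (S N)); lia).
  assert (HS : 0 < INR (S N)) by (apply lt_0_INR; lia).
  rewrite (sum_n_ext _ (fun k => sum_n (fun n =>
             (A n * cis (2 * PI * INR k * (INR j - INR n) / INR (S N)))%C) N)).
  2:{ intros k; rewrite <- sum_n_Cmult_r; apply sum_n_ext; intros n.
      rewrite <- Cmult_assoc, cis_add.
      rewrite <- (cis_add_2PI (2 * PI * INR k * (INR j - INR n) / INR (S N)) (k * q)).
      do 2 f_equal; rewrite Hm, plus_INR, !mult_INR; field; lra. }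
  rewrite sum_n_switch.
  rewrite (sum_n_ext_loc _ (fun n =>
             (A n * if Nat.eq_dec j n then RtoC (INR (S N)) else RtoC 0)%C))
    by (intros n Hn; rewrite sum_n_Cmult_l, sum_n_cis_roots; auto).
  rewrite (sum_n_single _ j).
  - rewrite (proj2 (Nat.leb_le j N) Hj).
    destruct (Nat.eq_dec j j) as [_|]; [C_goal; ring | congruence].
  - intros n _ Hn; destruct (Nat.eq_dec j n); [congruence | apply Cmult_0_r].
Qed.

(** * Fock amplitudes of the superposition *)

Lemma sqrt_fact_gt0 m : 0 < sqrt (INR (fact m)).
Proof. apply sqrt_lt_R0, INR_fact_lt_0. Qed.

Lemma coherent_polar r t m :
  coherent (RtoC r * cis t)%C m =
  (RtoC (exp (- r ^ 2 / 2) * r ^ m / sqrt (INR (fact m))) * cis (INR m * t))%C.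
Proof.
  unfold coherent.
  rewrite Cmod_mult, Cmod_R, Cmod_cis, Rmult_1_r, pow2_abs.
  rewrite Cpow_mult_l, <- RtoC_pow, cis_pow.
  pose proof (sqrt_fact_gt0 m).
  rewrite RtoC_div, !RtoC_mult by lra.
  field; intro H0; apply RtoC_inj in H0; lra.
Qed.

Lemma phi_un_eq N a eps m :
  phi_un N a eps m =
  (RtoC (eps ^ m / sqrt (INR (fact m))
         * (sqrt (INR (fact (m mod S N))) / eps ^ (m mod S N)))
   * a (m mod S N))%C.
Proof.
  set (A n := (RtoC (sqrt (INR (fact n)) / eps ^ n) * a n)%C).
  set (K := exp (eps ^ 2 / 2) / INR (S N) * (exp (- eps ^ 2 / 2) * eps ^ m / sqrt (INR (fact m)))).
  assert (HS : 0 < INR (S N)) by (apply lt_0_INR; lia).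
  unfold phi_un, coef, omega.
  rewrite (sum_n_ext _ (fun k => (RtoC K *
    (sum_n (fun n => A n * cis (- (2 * PI * INR n * INR k / INR (S N))))%C N
     * cis (INR m * (2 * PI * INR k / INR (S N)))))%C)).
  2:{ intros k; rewrite coherent_polar.
      rewrite (sum_n_ext _ (fun n => A n * cis (- (2 * PI * INR n * INR k / INR (S N))))%C)
        by (intros n; unfold A; C_goal; ring).
      unfold K; rewrite !RtoC_mult; C_goal; ring. }
  rewrite sum_n_Cmult_l, dft_inversion; unfold A.
  assert (HK : K * INR (S N) = eps ^ m / sqrt (INR (fact m))).
  { unfold K; replace (- eps ^ 2 / 2) with (- (eps ^ 2 / 2)) by field.
    rewrite exp_Ropp; pose proof (exp_pos (eps ^ 2 / 2)); pose proof (sqrt_fact_gt0 m).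
    field; lra. }
  rewrite <- HK, !RtoC_mult; C_goal; ring.
Qed.

Lemma phi_un_low N a eps m : eps <> 0 -> (m <= N)%nat -> phi_un N a eps m = a m.
Proof.
  intros Heps Hm; rewrite phi_un_eq, Nat.mod_small by lia.
  pose proof (sqrt_fact_gt0 m); pose proof (pow_nonzero eps m Heps).
  replace (eps ^ m / sqrt (INR (fact m)) * (sqrt (INR (fact m)) / eps ^ m)) with 1
    by (field; lra).
  apply Cmult_1_l.
Qed.

Lemma Cmod_phi_un_sq N a eps m : eps <> 0 ->
  Cmod (phi_un N a eps m) ^ 2 =
  exp_term (eps ^ 2) m / exp_term (eps ^ 2) (m mod S N) * Cmod (a (m mod S N)) ^ 2.
Proof.
  intros Heps; rewrite phi_un_eq, Cmod_mult, Cmod_R, Rpow_mult_distr, pow2_abs.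
  set (j := m mod S N); unfold exp_term.
  pose proof (sqrt_fact_gt0 m); pose proof (sqrt_fact_gt0 j).
  pose proof (pow_nonzero eps j Heps).
  assert (Hsq : forall i, (eps ^ 2) ^ i = (eps ^ i) ^ 2)
    by (intros i; rewrite <- !pow_mult; f_equal; lia).
  rewrite !Hsq, <- (pow2_sqrt (INR (fact m))), <- (pow2_sqrt (INR (fact j))) by apply pos_INR.
  rewrite !sqrt_pow2 by lra.
  field; lra.
Qed.

Lemma ex_series_phi_un_sq N a eps : eps <> 0 ->
  ex_series (fun m => Cmod (phi_un N a eps m) ^ 2).
Proof.
  intros Heps; set (x := eps ^ 2).
  assert (Hx : 0 < x) by (apply pow2_gt_0, Heps).
  set (K := sum_n (fun j => Cmod (a j) ^ 2 / exp_term x j) N).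
  apply (@ex_series_le R_AbsRing R_CompleteNormedModule _ (fun m => exp_term x m * K)).
  - intros m; change norm with Rabs; rewrite Rabs_pos_eq by apply pow2_ge_0.
    rewrite Cmod_phi_un_sq by exact Heps; fold x.
    set (j := m mod S N).
    pose proof (exp_term_gt0 x m Hx); pose proof (exp_term_gt0 x j Hx).
    assert (Cmod (a j) ^ 2 / exp_term x j <= K).
    { apply (sum_n_ge_term (fun j => Cmod (a j) ^ 2 / exp_term x j)).
      - intros k; pose proof (exp_term_gt0 x k Hx).
        apply Rdiv_le_0_compat; [apply pow2_ge_0 | lra].
      - pose proof (Nat.mod_upper_bound m (S N)); unfold j; lia. }
    replace (exp_term x m / exp_term x j * Cmod (a j) ^ 2)
      with (exp_term x m * (Cmod (a j) ^ 2 / exp_term x j)) by (field; lra).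
    apply Rmult_le_compat_l; lra.
  - apply ex_series_scal_r, ex_series_exp_term.
Qed.

Lemma coherent_rank_psi_tilde N a eps : coherent_rank_le (S N) (psi_tilde N a eps).
Proof.
  exists (fun k => (RtoC (/ sqrt (calN N a eps)) * coef N a eps k)%C),
         (fun k => (RtoC eps * omega N k)%C).
  intros m; rewrite csum_sum_n; unfold psi_tilde, phi_un.
  rewrite <- sum_n_Cmult_l; apply sum_n_ext; intros k; C_goal; ring.
Qed.

(** * Normalisation and fidelity *)

Section Construction.

Variables (N : nat) (a : nat -> C).
Hypothesis hsupp : forall n, (N < n)%nat -> a n = 0.
Hypothesis hnorm : sum_n (fun n => Cmod (a n) ^ 2) N = 1.

Lemma Cmod_a_sq_le1 j : (j <= N)%nat -> Cmod (a j) ^ 2 <= 1.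
Proof.
  intros Hj; rewrite <- hnorm.
  apply (sum_n_ge_term (fun n => Cmod (a n) ^ 2)); [intros; apply pow2_ge_0 | exact Hj].
Qed.

Lemma calN_split eps : eps <> 0 ->
  calN N a eps = 1 + Series (fun k => Cmod (phi_un N a eps (S N + k)%nat) ^ 2).
Proof.
  intros Heps; unfold calN, sqnorm.
  rewrite (Series_incr_n _ (S N)) by (lia || apply ex_series_phi_un_sq, Heps).
  simpl Nat.pred; rewrite <- sum_n_Reals, <- hnorm; f_equal.
  apply sum_n_ext_loc; intros n Hn; rewrite phi_un_low; auto.
Qed.

Lemma calN_ge1 eps : eps <> 0 -> 1 <= calN N a eps.
Proof.
  intros Heps; rewrite calN_split by exact Heps.
  enough (0 <= Series (fun k => Cmod (phi_un N a eps (S N + k)%nat) ^ 2)) by lra.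
  apply Series_nonneg; [intros; apply pow2_ge_0|].
  apply (ex_series_incr_n (fun m => Cmod (phi_un N a eps m) ^ 2)), ex_series_phi_un_sq, Heps.
Qed.

Lemma phi_un_tail_le eps k : eps <> 0 -> Rabs eps < 1 / 2 ->
  Cmod (phi_un N a eps (S N + k)%nat) ^ 2 <= exp_term (eps ^ 2) (S N) * (4 ^ N * (/ 4) ^ k).
Proof.
  intros Heps Hsmall.
  set (x := eps ^ 2).
  assert (Hx : 0 < x <= / 4)
    by (split; [apply pow2_gt_0, Heps | unfold x; rewrite <- pow2_abs; pose proof (Rabs_pos eps); nra]).
  set (m := (S N + k)%nat); set (j := m mod S N); set (q := (m / S N)%nat).
  assert (Hj : (j <= N)%nat) by (pose proof (Nat.mod_upper_bound m (S N)); unfold j; lia).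
  assert (Hm : m = (j + q * S N)%nat) by (pose proof (Nat.div_mod_eq m (S N)); unfold j, q; lia).
  (* [m - j] is a positive multiple [S N + s] of [S N], and [k <= s + N] since [j <= N]. *)
  set (s := ((q - 1) * S N)%nat).
  assert (Hms : m = (j + (S N + s))%nat) by (destruct q; unfold s; simpl in *; lia).
  rewrite Cmod_phi_un_sq by exact Heps; fold x m j.
  pose proof (exp_term_gt0 x j (proj1 Hx)); pose proof (exp_term_gt0 x (S N) (proj1 Hx)).
  assert (Hratio : exp_term x m / exp_term x j <= exp_term x (S N) * x ^ s).
  { apply Rmult_le_reg_r with (exp_term x j); [lra|].
    unfold Rdiv; rewrite Rmult_assoc, Rinv_l, Rmult_1_r by lra.
    rewrite Hms; eapply Rle_trans; [apply exp_term_add_le; lra|].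
    rewrite Rmult_comm; apply Rmult_le_compat_r; [lra|].
    eapply Rle_trans; [apply exp_term_add_le; lra|].
    apply Rmult_le_compat_l; [lra | apply exp_term_le_pow; lra]. }
  assert (Hgeom : x ^ s <= 4 ^ N * (/ 4) ^ k) by (apply pow_le_geom; [lra | unfold m in Hms; lia]).
  pose proof (Cmod_a_sq_le1 j Hj); pose proof (pow2_ge_0 (Cmod (a j))).
  assert (0 <= exp_term x m / exp_term x j)
    by (pose proof (exp_term_gt0 x m (proj1 Hx)); apply Rdiv_le_0_compat; lra).
  apply Rle_trans with (exp_term x m / exp_term x j); [nra|].
  apply Rle_trans with (1 := Hratio); apply Rmult_le_compat_l; lra.
Qed.

Lemma calN_sub1_le eps : eps <> 0 -> Rabs eps < 1 / 2 ->
  calN N a eps - 1 <= 4 ^ S N * (eps ^ (2 * S N) / INR (fact (S N))).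
Proof.
  intros Heps Hsmall; rewrite calN_split by exact Heps.
  set (T := exp_term (eps ^ 2) (S N) * 4 ^ N).
  assert (HT : 0 <= T)
    by (apply Rmult_le_pos; [apply Rlt_le, exp_term_gt0, pow2_gt_0, Heps | apply pow_le; lra]).
  assert (Hgeom : is_series (fun k => (/ 4) ^ k) (/ (1 - / 4)))
    by (apply is_series_geom; rewrite Rabs_pos_eq; lra).
  assert (Htail : Series (fun k => Cmod (phi_un N a eps (S N + k)%nat) ^ 2)
                  <= Series (fun k => T * (/ 4) ^ k)).
  { apply Series_le.
    - intros k; split; [apply pow2_ge_0|].
      unfold T; rewrite Rmult_assoc; apply phi_un_tail_le; assumption.
    - apply (ex_series_scal_l T (fun k => (/ 4) ^ k)); eexists; exact Hgeom. }
  rewrite Series_scal_l, (is_series_unique (pow (/ 4)) _ Hgeom) in Htail.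
  replace (4 ^ S N * (eps ^ (2 * S N) / INR (fact (S N)))) with (4 * T)
    by (unfold T, exp_term; rewrite pow_mult; simpl; ring).
  replace (/ (1 - / 4)) with (4 / 3) in Htail by field.
  lra.
Qed.

Lemma inner_psi_tilde eps : eps <> 0 ->
  inner a (psi_tilde N a eps) = RtoC (/ sqrt (calN N a eps)).
Proof.
  intros Heps; set (c := / sqrt (calN N a eps)).
  assert (Hterm : forall m, (Cconj (a m) * psi_tilde N a eps m)%C = RtoC (c * Cmod (a m) ^ 2)).
  { intros m; unfold psi_tilde; fold c.
    destruct (Nat.le_gt_cases m N) as [Hm|Hm].
    - rewrite phi_un_low, RtoC_mult, Cmod2_conj by assumption; C_goal; ring.
    - rewrite hsupp, Cmod_0 by exact Hm; apply C_eq; simpl; ring. }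
  unfold inner.
  rewrite (Series_ext _ (fun m => c * Cmod (a m) ^ 2)) by (intros m; rewrite Hterm; reflexivity).
  rewrite (Series_ext (fun m => snd _) (fun _ => 0)) by (intros m; rewrite Hterm; reflexivity).
  rewrite Series_scal_l, (Series_finite _ N), (Series_finite _ 0), hnorm, sum_O; auto.
  - apply C_eq; simpl; ring.
  - intros k Hk; rewrite hsupp by exact Hk; rewrite Cmod_0; ring.
Qed.

Lemma fidelity_psi_tilde eps : eps <> 0 ->
  fidelity a (psi_tilde N a eps) = / calN N a eps.
Proof.
  intros Heps; unfold fidelity; rewrite inner_psi_tilde, Cmod_R, pow2_abs by exact Heps.
  pose proof (calN_ge1 eps Heps); rewrite pow_inv, pow2_sqrt by lra; reflexivity.
Qed.

Lemma sqnorm_psi_tilde eps : eps <> 0 -> sqnorm (psi_tilde N a eps) = 1.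
Proof.
  intros Heps; unfold sqnorm, psi_tilde.
  rewrite (Series_ext _ (fun m => (/ sqrt (calN N a eps)) ^ 2 * Cmod (phi_un N a eps m) ^ 2))
    by (intros m; rewrite Cmod_mult, Cmod_R, Rpow_mult_distr, pow2_abs; reflexivity).
  rewrite Series_scal_l; change (Series _) with (calN N a eps).
  pose proof (calN_ge1 eps Heps); rewrite pow_inv, pow2_sqrt by lra; field; lra.
Qed.

Lemma fidelity_psi_tilde_gt delta : 0 < delta -> exists eta, 0 < eta /\
  forall eps, eps <> 0 -> Rabs eps < eta -> fidelity a (psi_tilde N a eps) > 1 - delta.
Proof.
  intros Hdelta; set (M := 4 ^ S N).
  assert (HM : 0 < M) by (apply pow_lt; lra).
  exists (Rmin (1 / 2) (delta / M)); split; [apply Rmin_pos; [lra | apply Rdiv_lt_0_compat; lra]|].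
  intros eps Heps Hsmall.
  assert (Hhalf : Rabs eps < 1 / 2) by (eapply Rlt_le_trans; [exact Hsmall | apply Rmin_l]).
  assert (Hdel : M * Rabs eps < delta).
  { assert (Hlt : Rabs eps < delta / M) by (eapply Rlt_le_trans; [exact Hsmall | apply Rmin_r]).
    apply Rmult_lt_compat_l with (r := M) in Hlt; [|exact HM].
    replace (M * (delta / M)) with delta in Hlt by (field; lra); exact Hlt. }
  assert (Hbound : calN N a eps - 1 < delta).
  { apply Rle_lt_trans with (2 := Hdel), Rle_trans with (1 := calN_sub1_le eps Heps Hhalf).
    apply Rmult_le_compat_l; [lra | apply pow_fact_le_Rabs; lra]. }
  pose proof (calN_ge1 eps Heps).
  rewrite fidelity_psi_tilde by exact Heps.
  replace (calN N a eps) with (1 + (calN N a eps - 1)) by ring.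
  pose proof (inv_1_plus_ge (calN N a eps - 1)); lra.
Qed.

End Construction.

Theorem theorem1 (N : nat) (a : nat -> C)
  (hsupp : forall n, (N < n)%nat -> a n = 0)
  (hnorm : sum_n (fun n => (Cmod (a n))^2) N = 1) :
  approx_coherent_rank_le (S N) a
  /\ (exists M delta : R, 0 < delta /\
        forall eps : R, eps <> 0 -> Rabs eps < delta ->
          Rabs (calN N a eps - 1) <= M * (eps ^ (2 * S N) / INR (fact (S N))))
  /\ (forall eps : R, eps <> 0 -> fidelity a (psi_tilde N a eps) = / calN N a eps)
  /\ (forall delta : R, 0 < delta -> exists eta : R, 0 < eta /\
        forall eps : R, eps <> 0 -> Rabs eps < eta ->
          fidelity a (psi_tilde N a eps) > 1 - delta).
Proof.
  split; [|split; [|split]].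
  - intros delta Hdelta.
    destruct (fidelity_psi_tilde_gt N a hsupp hnorm delta Hdelta) as (eta & Heta & Hfid).
    exists (psi_tilde N a (eta / 2)); repeat split.
    + apply coherent_rank_psi_tilde.
    + apply sqnorm_psi_tilde; auto; lra.
    + apply Hfid; [lra | rewrite Rabs_pos_eq; lra].
  - exists (4 ^ S N), (1 / 2); split; [lra|].
    intros eps Heps Hsmall; pose proof (calN_ge1 N a hnorm eps Heps).
    rewrite Rabs_pos_eq by lra; apply calN_sub1_le; assumption.
  - apply fidelity_psi_tilde; assumption.
  - apply fidelity_psi_tilde_gt; assumption.
Qed.
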